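(* Let $M$ be a mould such that $M^0=0$, $M^1=0$, $M$ is alternal, and there exists a constant mould $C$ such that $\mathrm{swap}(M)+C$ is alternil. Then $M$ satisfies Ecalle's senary relation $$\mathrm{teru}(M)^r=\bigl(\mathrm{push}\circ\mathrm{mantar}\circ\mathrm{teru}\circ\mathrm{mantar}\bigr)(M)^r$$ for $r=1,2$ and $3$.
   Context: Moulds. A mould is a sequence $M=(M^m)_{m\geqslant 0}$ with $M^0\in\mathbb Q$ and $M^m=M^m(x_1,\dots,x_m)\in\mathbb Q[x_1,\dots,x_m]$; $M^m(u_1,\dots,u_m)$ denotes substitution $x_i\mapsto u_i$; $M$ is extended linearly to formal linear combinations of words by $(u_1,\dots,u_m)\mapsto M^m(u_1,\dots,u_m)$. A mould $C$ is constant if every $C^m$ is a rational number. For $m\geqslant1$: $\mathrm{teru}(M)^1=M^1$, and for $m\geqslant2$, $\mathrm{teru}(M)^m(u_1,\dots,u_m)=M^m(u_1,\dots,u_m)+\frac{1}{u_m}\{M^{m-1}(u_1,\dots,u_{m-2},u_{m-1}+u_m)-M^{m-1}(u_1,\dots,u_{m-2},u_{m-1})\}$; $\mathrm{mantar}(M)^m(u_1,\dots,u_m)=(-1)^{m-1}M^m(u_m,\dots,u_1)$; $\mathrm{push}(M)^m(u_1,\dots,u_m)=M^m(-u_1-\cdots-u_m,u_1,\dots,u_{m-1})$; $\mathrm{swap}(M)^m(v_1,\dots,v_m)=M^m(v_m,v_{m-1}-v_m,\dots,v_1-v_2)$ (in depth $0$: $\mathrm{teru},\mathrm{push},\mathrm{swap}$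 preserve $M^0$ and $\mathrm{mantar}(M)^0=-M^0$). $(M+C)^m=M^m+C^m$. Alternal: $M^0=0$ and for all $p,q\geqslant1$, $\sum_{w}M^{p+q}(w)=0$, the sum over all shuffles $w$ (counted with multiplicity) of the words $(x_1,\dots,x_p)$ and $(x_{p+1},\dots,x_{p+q})$. Alternil: define a bilinear product $\star$ on formal linear combinations of words in the letters $x_1,x_2,\dots$ with coefficients in $\mathbb Q(x_1,x_2,\dots)$ by $\emptyset\star\omega=\omega\star\emptyset=\omega$ and, for letters $u\neq v$ and words $\omega,\eta$, $u\omega\star v\eta=u(\omega\star v\eta)+v(u\omega\star\eta)+\frac{1}{u-v}\bigl(u(\omega\star\eta)-v(\omega\star\eta)\bigr)$. A mould $N$ is alternil if $N^0=0$ and for all $p,q\geqslant1$, applying $N$ (linearly, coefficients kept) to $(x_1,\dots,x_p)\star(x_{p+1},\dots,x_{p+q})$ gives $0$. *)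

(* moulds as families of multivariate polynomials over rat
   (multinomials), evaluated in the field of rational functions
   Q(x_1,...,x_n) = {fraction {mpoly rat[n]}}. *)
From HB Require Import structures.
From mathcomp Require Import all_boot all_order all_algebra.
From mathcomp Require Import mpoly.
From mathcomp Require Import fraction.
Set Implicit Arguments. Unset Strict Implicit. Unset Printing Implicit Defensive.
Import Order.TTheory GRing.Theory Num.Theory.
Local Open Scope ring_scope.

Definition RF (n : nat) := {fraction {mpoly rat[n]}}.

Definition polyF n (p : {mpoly rat[n]}) : RF n := tofrac p.
Definition cstF n (c : rat) : RF n := polyF (c%:MP).

(* The letters x_1, ..., x_n (0-indexed as 'X_0, ..., 'X_(n-1)). *)
Definition letters (n : nat) : seq (RF n) := [seq polyF 'X_i | i : 'I_n].

Definition mould := forall m : nat, {mpoly rat[m]}.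

Definition cmould := nat -> rat.

(* Evaluators of moulds on words (u_1,...,u_m) of rational functions: the
   depth is the length of the word. *)
Definition fmould := forall n : nat, seq (RF n) -> RF n.

(* M^m(u_1,...,u_m): substitution x_i |-> u_i. *)
Definition mev (M : mould) : fmould := fun n s =>
  mmap (@polyF n \o (fun c : rat => c%:MP))
       (fun i : 'I_(size s) => nth 0 s i) (M (size s)).

Definition mteru (F : fmould) : fmould := fun n s =>
  if (size s <= 1)%N then F n s else
  let a := nth 0 s (size s).-2 in
  let b := nth 0 s (size s).-1 in
  let pre := take (size s).-2 s in
  F n s + b^-1 * (F n (rcons pre (a + b)) - F n (rcons pre a)).

(* mmantar: (-1)^(m-1) M^m(u_m,...,u_1), and -M^0 in depth 0 *)
Definition mmantar (F : fmould) : fmould := fun n s =>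
  (-1) ^+ (size s).+1 * F n (rev s).

Definition mpush (F : fmould) : fmould := fun n s =>
  match s with
  | [::] => F n [::]
  | _ => F n ((- \sum_(x <- s) x) :: take (size s).-1 s)
  end.

(* mswap: M^m(v_m, v_(m-1) - v_m, ..., v_1 - v_2) *)
Definition mswap (F : fmould) : fmould := fun n s =>
  F n (pairmap (fun x y => y - x) 0 (rev s)).

Definition maddC (F : fmould) (C : cmould) : fmould := fun n s =>
  F n s + cstF n (C (size s)).

(* shuffle product of two words, as a list of words (with multiplicity) *)
Fixpoint shuffle {T : Type} (a : seq T) : seq T -> seq (seq T) :=
  match a with
  | [::] => fun b => [:: b]
  | u :: a' =>
    fix shuffle_ua (b : seq T) : seq (seq T) :=
      match b with
      | [::] => [:: u :: a']
      | v :: b' => [seq u :: w | w <- shuffle a' (v :: b')] ++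
                   [seq v :: w | w <- shuffle_ua b']
      end
  end.

(* The product [star] on formal linear combinations of words (lists of
   (coefficient, word) pairs), coefficients in the field K; letters are
   elements of K (here the variables x_i):
   u w * v e = u (w * v e) + v (u w * e) + 1/(u-v) (u (w * e) - v (w * e)).
   It is only used with distinct letters u <> v. *)
Fixpoint star {K : fieldType} (a : seq K) : seq K -> seq (K * seq K) :=
  match a with
  | [::] => fun b => [:: (1, b)]
  | u :: a' =>
    fix star_ua (b : seq K) : seq (K * seq K) :=
      match b with
      | [::] => [:: (1, u :: a')]
      | v :: b' =>
        [seq (cw.1, u :: cw.2) | cw <- star a' (v :: b')] ++
        [seq (cw.1, v :: cw.2) | cw <- star_ua b'] ++
        [seq ((u - v)^-1 * cw.1, u :: cw.2) | cw <- star a' b'] ++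
        [seq (- ((u - v)^-1 * cw.1), v :: cw.2) | cw <- star a' b']
      end
  end.

Arguments mev M n s : clear implicits.
Arguments mteru F n s : clear implicits.
Arguments mmantar F n s : clear implicits.
Arguments mpush F n s : clear implicits.
Arguments mswap F n s : clear implicits.
Arguments maddC F C n s : clear implicits.

Definition alternal (M : mould) : Prop :=
  M 0%N = 0 /\
  forall p q : nat, (0 < p)%N -> (0 < q)%N ->
    \sum_(w <- shuffle (take p (letters (p + q))) (drop p (letters (p + q))))
      mev M (p + q)%N w = 0.

Definition alternil (N : fmould) : Prop :=
  N 0%N [::] = 0 /\
  forall p q : nat, (0 < p)%N -> (0 < q)%N ->
    \sum_(cw <- star (take p (letters (p + q))) (drop p (letters (p + q))))
      cw.1 * N (p + q)%N cw.2 = 0.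

From HB Require Import structures.
From mathcomp Require Import all_boot all_order all_algebra.
From mathcomp Require Import mpoly.
From mathcomp Require Import fraction.
From mathcomp Require Import ring.
Import Order.TTheory GRing.Theory Num.Theory.
Local Open Scope ring_scope.

(* Alternality in depths 2 and 3 makes M antisymmetric, M(a,b) = -M(b,a), and
   reversal invariant, M(a,b,c) = M(c,b,a), so mantar fixes M in these depths.
   The alternility of swap(M) + C in depth 2 gives, once the constant C^2 is seen
   to vanish, M(a,b) = M(-b,a+b), which is the senary relation in depth 2 after
   two steps.  In depth 3 it gives, after clearing denominators, an expression
   for teru(M) at (a,b,c) that is invariant under (a,b,c) -> (b,a,-a-b-c), and
   the right-hand side of the senary relation at (a,b,c) is teru(M) at
   (b,a,-a-b-c).
   Shuffle and star relations are only given at the letters x_i; they hold at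
   arbitrary words because, with denominators cleared, they are images under
   [tofrac] of a polynomial identity, which then survives any substitution. *)

Definition mevp (M : mould) {k} (t : seq {mpoly rat[k]}) : {mpoly rat[k]} :=
  mmap (@mpolyC k rat) (fun i : 'I_(size t) => nth 0 t i) (M (size t)).

Local Notation subst s := (mmap (@tofrac {mpoly rat[_]} \o @mpolyC _ rat) s).

Local Notation X j := ('X_(inord j) : {mpoly rat[_]}).

Lemma mev_rmorph (M : mould) n k (phi : {rmorphism {mpoly rat[k]} -> RF n}) :
  (forall c, phi c%:MP = cstF n c) ->
  forall t, phi (mevp M t) = mev M n (map phi t).
Proof.
move=> phiC t; rewrite /mev /mevp size_map /mmap rmorph_sum; apply: eq_bigr => m _.
rewrite rmorphM /= phiC; congr (_ * _).
rewrite /mmap1 rmorph_prod; apply: eq_bigr => i _.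
by rewrite rmorphXn (nth_map 0).
Qed.

Lemma mev_tofrac (M : mould) k (t : seq {mpoly rat[k]}) :
  mev M k (map (@tofrac _) t) = tofrac (mevp M t).
Proof.
by rewrite (@mev_rmorph M _ _ (@tofrac _ : {rmorphism {mpoly rat[k]} -> RF k})).
Qed.

Lemma mev_subst (M : mould) n k (s : 'I_k -> RF n) (t : seq {mpoly rat[k]}) :
  mev M n (map (subst s) t) = subst s (mevp M t).
Proof.
by rewrite (@mev_rmorph M _ _ (subst s : {rmorphism _ -> RF n})) // => c; apply: mmapC.
Qed.

Lemma substM n k (s : 'I_k -> RF n) : {morph subst s : p q / p * q}.
Proof. exact: rmorphM. Qed.

Lemma subst_X n k (w : seq (RF n)) j : (j < k.+1)%N ->
  subst (fun i : 'I_k.+1 => nth 0 w i) (X j) = nth 0 w j.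
Proof. by move=> lt_j_k; rewrite mmapX mmap1U inordK. Qed.

Lemma lettersE k : letters k.+1 = [seq polyF (X j) | j <- iota 0 k.+1].
Proof.
rewrite /letters /image_mem -val_enum_ord -map_comp; apply: eq_map => i /=.
by rewrite inord_val.
Qed.

Lemma polyF_neq0 k (v : 'I_k -> rat) (p : {mpoly rat[k]}) :
  meval v p != 0 -> polyF p != 0.
Proof. by rewrite tofrac_eq0; apply: contra => /eqP ->; rewrite meval0. Qed.

Lemma clear_denominators {K : fieldType} {a b s p q : K} : a != 0 -> b != 0 ->
  a * b * s + b * p + a * q = 0 <-> s + a^-1 * p + b^-1 * q = 0.
Proof.
move=> a_neq0 b_neq0.
have -> : s + a^-1 * p + b^-1 * q = (a * b)^-1 * (a * b * s + b * p + a * q).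
  by field; rewrite a_neq0 b_neq0.
split=> [-> | /eqP]; first by rewrite mulr0.
by rewrite mulf_eq0 invr_eq0 mulf_eq0 (negbTE a_neq0) (negbTE b_neq0) => /eqP.
Qed.

Section SenaryRelation.

Context {M : mould} (alternal_M : alternal M).

Lemma mev2_antisym {n} (a b : RF n) : mev M n [:: a; b] = - mev M n [:: b; a].
Proof.
have generic : mevp M [:: X 0; X 1] + mevp M [:: X 1; X 0] = 0 :> {mpoly rat[2]}.
  apply/eqP; rewrite -tofrac_eq0 tofracD -!mev_tofrac; apply/eqP.
  by have := alternal_M.2 1 1 isT isT; rewrite lettersE /= !big_cons big_nil addr0.
move/(congr1 (subst (fun i : 'I_2 => nth 0 [:: a; b] i))): generic.
by rewrite mmapD mmap0 -!mev_subst /= !subst_X // => /eqP; rewrite addr_eq0 => /eqP.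
Qed.

Lemma mev3_rev {n} (a b c : RF n) : mev M n [:: a; b; c] = mev M n [:: c; b; a].
Proof.
have generic : mevp M [:: X 0; X 1; X 2] + mevp M [:: X 1; X 0; X 2]
    + mevp M [:: X 1; X 2; X 0] = 0 :> {mpoly rat[3]}.
  apply/eqP; rewrite -tofrac_eq0 !tofracD -!mev_tofrac; apply/eqP.
  have := alternal_M.2 1 2 isT isT.
  by rewrite lettersE /= !big_cons big_nil addr0 addrA.
have shuffle3 (x y z : RF n) :
    mev M n [:: x; y; z] + mev M n [:: y; x; z] + mev M n [:: y; z; x] = 0.
  move/(congr1 (subst (fun i : 'I_3 => nth 0 [:: x; y; z] i))): generic.
  by rewrite !mmapD mmap0 -!mev_subst /= !subst_X.
apply/eqP; rewrite -subr_eq0 -(subrr 0) -{1}(shuffle3 a b c) -(shuffle3 c b a).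
by apply/eqP; ring.
Qed.

Context {C : cmould} (alternil_swapM : alternil (maddC (mswap (mev M)) C)).
Context (M1_eq0 : M 1%N = 0).

Lemma mev1_eq0 {n} (a : RF n) : mev M n [:: a] = 0.
Proof. by rewrite /mev /= M1_eq0 mmap0. Qed.

Lemma mev_alternil2 {n} (u v : RF n) :
  mev M n [:: v; u - v] + mev M n [:: u; v - u] + cstF n (C 2%N) *+ 2 = 0.
Proof.
have generic : mevp M [:: X 1; X 0 - X 1] + mevp M [:: X 0; X 1 - X 0]
    + (C 2%N)%:MP *+ 2 = 0 :> {mpoly rat[2]}.
  apply/eqP; rewrite -tofrac_eq0 tofracD tofracMn tofracD -!mev_tofrac; apply/eqP.
  have := alternil_swapM.2 1 1 isT isT.
  rewrite lettersE /= !big_cons big_nil /maddC /mswap /= !subr0 !mev1_eq0.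
  by rewrite !tofracB /cstF /polyF => <-; ring.
move/(congr1 (subst (fun i : 'I_2 => nth 0 [:: u; v] i))): generic.
by rewrite mmapD mmapMn mmapD mmap0 mmapC -!mev_subst /= !mmapB !subst_X.
Qed.

Lemma mev_alternil3 {n} (u v w : RF n) :
  (u - w) * (u - v) * (mev M n [:: w; v - w; u - v] + mev M n [:: w; u - w; v - u]
     + mev M n [:: u; w - u; v - w] + cstF n (C 3%N) *+ 3)
  + (u - v) * (mev M n [:: u; v - u] - mev M n [:: w; v - w])
  + (u - w) * (mev M n [:: w; u - w] - mev M n [:: w; v - w]) = 0.
Proof.
have generic : (X 0 - X 2) * (X 0 - X 1) * (mevp M [:: X 2; X 1 - X 2; X 0 - X 1]
     + mevp M [:: X 2; X 0 - X 2; X 1 - X 0] + mevp M [:: X 0; X 2 - X 0; X 1 - X 2]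
     + (C 3%N)%:MP *+ 3)
  + (X 0 - X 1) * (mevp M [:: X 0; X 1 - X 0] - mevp M [:: X 2; X 1 - X 2])
  + (X 0 - X 2) * (mevp M [:: X 2; X 0 - X 2] - mevp M [:: X 2; X 1 - X 2])
   = 0 :> {mpoly rat[3]}.
  have letters_sub_neq0 i j : (i < j < 3)%N -> tofrac (X i) - tofrac (X j) != 0 :> RF 3.
    move=> /andP[lt_ij lt_j3]; rewrite -tofracB (@polyF_neq0 _ (fun l => l%:R)) //.
    rewrite mevalB !mevalXU !inordK ?subr_eq0 ?eqr_nat ?ltn_eqF //.
    exact: ltn_trans lt_j3.
  apply/eqP; rewrite -tofrac_eq0 !(tofracB, tofracM, tofracMn, tofracD) -!mev_tofrac.
  apply/eqP/(clear_denominators (letters_sub_neq0 0 2%N isT)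
                                 (letters_sub_neq0 0 1%N isT)).
  have := alternil_swapM.2 1 2 isT isT.
  rewrite lettersE /= !big_cons big_nil /maddC /mswap /= !subr0 !tofracB.
  rewrite /cstF /polyF => <-.
  by ring.
move/(congr1 (subst (fun i : 'I_3 => nth 0 [:: u; v; w] i))): generic.
by rewrite !(mmapB, substM, mmapMn, mmapD) mmap0 mmapC -!mev_subst /= !mmapB !subst_X.
Qed.

Lemma alternil_cst2_eq0 : C 2%N = 0.
Proof.
have := mev_alternil2 (n := 0) 0 0.
rewrite subrr {1}mev2_antisym addNr add0r /cstF /polyF -tofracMn -mpolyCMn.
by move/eqP; rewrite tofrac_eq0 mpolyC_eq0 mulrn_eq0 => /eqP.
Qed.

Lemma mev2_rotate {n} (a b : RF n) : mev M n [:: a; b] = mev M n [:: - b; a + b].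
Proof.
have := mev_alternil2 (a + b) a.
have -> : a + b - a = b by ring.
have -> : a - (a + b) = - b by ring.
rewrite alternil_cst2_eq0 /cstF /polyF mpolyC0 tofrac0 mul0rn addr0.
by move=> /eqP; rewrite addr_eq0 => /eqP ->; rewrite mev2_antisym opprK.
Qed.

Lemma mteru3_alternil {n} (a b c : RF n) : c != 0 -> b + c != 0 ->
  mteru (mev M) n [:: a; b; c] =
  - (mev M n [:: a; b + c; - c] + mev M n [:: a + b + c; - (b + c); b]
     + cstF n (C 3%N) *+ 3)
  - (b + c)^-1 * (mev M n [:: a + b + c; - c] - mev M n [:: a; b]).
Proof.
move=> c_neq0 bc_neq0; have := mev_alternil3 (a + b + c) (a + b) a.
have -> : a + b - a = b by ring.
have -> : a + b + c - (a + b) = c by ring.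
have -> : a + b + c - a = b + c by ring.
have -> : a + b - (a + b + c) = - c by ring.
have -> : a - (a + b + c) = - (b + c) by ring.
move/(clear_denominators bc_neq0 c_neq0) => h.
rewrite /mteru /=; apply/eqP; rewrite -subr_eq0 -h; apply/eqP.
by ring.
Qed.

(* Side conditions [_ != 0] in [RF n] are closed with [exact]: [done] gets lost
   unfolding the fraction-field equality. *)
Lemma mteru3_twist {n} (a b c : RF n) : c != 0 -> b + c != 0 -> a + b + c != 0 ->
  mteru (mev M) n [:: a; b; c] = mteru (mev M) n [:: b; a; - (a + b + c)].
Proof.
move=> c_neq0 bc_neq0 abc_neq0.
have a_sub_abc : a - (a + b + c) = - (b + c) by ring.
have y_neq0 : - (a + b + c) != 0 by rewrite oppr_eq0; exact: abc_neq0.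
have ay_neq0 : a - (a + b + c) != 0 by rewrite a_sub_abc oppr_eq0; exact: bc_neq0.
rewrite (mteru3_alternil a b c c_neq0 bc_neq0) (mteru3_alternil b a _ y_neq0 ay_neq0).
have -> : b + a - (a + b + c) = - c by ring.
rewrite a_sub_abc !opprK invrN (mev3_rev b) (mev3_rev (- c)).
rewrite (mev2_antisym (- c)) (mev2_antisym b).
by ring.
Qed.

Lemma senary_depth1 {n} (a : RF n) :
  mteru (mev M) n [:: a] = mpush (mmantar (mteru (mmantar (mev M)))) n [:: a].
Proof. by rewrite /mteru /mpush /mmantar /= !mev1_eq0 !mulr0. Qed.

Lemma senary_depth2 {n} (a b : RF n) :
  mteru (mev M) n [:: a; b] = mpush (mmantar (mteru (mmantar (mev M)))) n [:: a; b].
Proof.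
rewrite /mteru /mpush /mmantar /= !mev1_eq0 !big_cons big_nil addr0.
rewrite mev2_rotate (mev2_rotate (- b)) (addrC a b) addKr.
by ring.
Qed.

Lemma senary_depth3 {n} (a b c : RF n) : c != 0 -> b + c != 0 -> a + b + c != 0 ->
  mteru (mev M) n [:: a; b; c] =
  mpush (mmantar (mteru (mmantar (mev M)))) n [:: a; b; c].
Proof.
move=> c_neq0 bc_neq0 abc_neq0; rewrite (mteru3_twist a b c c_neq0 bc_neq0 abc_neq0).
rewrite /mteru /mpush /mmantar /= !big_cons big_nil addr0 !addrA.
rewrite (mev3_rev b) (mev2_antisym b (a + _)) (mev2_antisym b a).
by ring.
Qed.

End SenaryRelation.

Theorem proposition4p2 (M : mould) :
  M 0%N = 0 -> M 1%N = 0 -> alternal M ->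
  (exists C : cmould, alternil (maddC (mswap (mev M)) C)) ->
  forall r : nat, (1 <= r <= 3)%N ->
    mteru (mev M) r (letters r) =
    mpush (mmantar (mteru (mmantar (mev M)))) r (letters r).
Proof.
move=> _ M1_eq0 alternal_M [C alternil_swapM] r /andP[r_gt0 r_le3].
case: r r_gt0 r_le3 => [|[|[|[|r]]]] // _ _; rewrite lettersE /=.
- exact: (senary_depth1 M1_eq0).
- exact: (senary_depth2 alternal_M alternil_swapM M1_eq0).
apply: (senary_depth3 alternal_M alternil_swapM); rewrite -?tofracD;
  by apply: (@polyF_neq0 _ (fun=> 1)); rewrite ?mevalD !mevalXU.
Qed.
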